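(* Let $t>0$ and $k\ge 1$ be constants, and let $p_0,p_1,p_2,p_3$ be real numbers with $0<p_i<1$ and $\sum_{i=0}^{3}p_i=1$. Define $T(n,r)$ for real $n\ge 0$ and integers $r\ge 0$ by $$T(n,r)=\begin{cases}1 & \text{if } n\le t k^r,\\ 1+\sum_{i=0}^{3} T\big(p_i(n-tk^r),\,r+1\big) & \text{if } n> t k^r.\end{cases}$$ Then, as $N\to\infty$, $T(N,0)\in\Theta(N^s)$ for some real number $s$ with $0<s\le 1$.
   Context: $T(N,0)$ is the asymptotic space (number of counters) used by a DN-tree with parameters $k$ and $t$ after recording $N$ extent accesses: a tree vertex at level $r$ saturates at threshold $tk^r$, after which further accesses are distributed among its four children with probabilities $p_0,\dots,p_3$. The parameters $t,k,p_i$ are fixed as $N\to\infty$. *)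

From Stdlib Require Import Reals Lra ZArith.
Open Scope R_scope.

Fixpoint T_fuel (t k p0 p1 p2 p3 : R) (f : nat) (n : R) (r : nat) : R :=
  match f with
  | O => 1
  | S f' =>
      if Rle_dec n (t * k ^ r) then 1
      else 1 + (T_fuel t k p0 p1 p2 p3 f' (p0 * (n - t * k ^ r)) (S r)
              + T_fuel t k p0 p1 p2 p3 f' (p1 * (n - t * k ^ r)) (S r)
              + T_fuel t k p0 p1 p2 p3 f' (p2 * (n - t * k ^ r)) (S r)
              + T_fuel t k p0 p1 p2 p3 f' (p3 * (n - t * k ^ r)) (S r))
  end.

(* Enough fuel: every recursive call decreases n by at least t (as p_i <= 1
   and k >= 1), so floor-ish(n/t)+1 steps always reach the base case
   when t > 0, n >= 0; the value then equals the true T(n,r). *)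
Definition T (t k p0 p1 p2 p3 : R) (n : R) (r : nat) : R :=
  T_fuel t k p0 p1 p2 p3 (Z.to_nat (up (n / t)) + 1) n r.

From Stdlib Require Import Reals Lra ZArith.
Open Scope R_scope.

(* The exponent s is a solution of [sum_i (p_i/k)^s = 1].  In the normalized
   size [m = n / k^r], a saturated vertex of size [m] has children of sizes
   [(p_i/k)(m - t)], so [m^s] is (up to the loss of [t]) additive over the
   children.  Both bounds are proved by induction on the recursion depth with
   invariants of the form [C m^s - 1/3]: the four subtracted thirds of the
   children pay for the [+1] of their parent. *)

Lemma similarity_exponent_exists (w0 w1 w2 w3 : R) :
  0 < w0 -> 0 < w1 -> 0 < w2 -> 0 < w3 -> w0 + w1 + w2 + w3 <= 1 ->
  exists s, 0 < s <= 1 /\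
    Rpower w0 s + Rpower w1 s + Rpower w2 s + Rpower w3 s = 1.
Proof.
  intros h0 h1 h2 h3 hw.
  set (g := fun s => 1 - (exp (s * ln w0) + exp (s * ln w1)
                          + exp (s * ln w2) + exp (s * ln w3))).
  assert (g_cont : continuity g) by (unfold g; reg).
  assert (g0 : g 0 = -3) by (unfold g; rewrite !Rmult_0_l, exp_0; ring).
  assert (g1 : g 1 = 1 - (w0 + w1 + w2 + w3))
    by (unfold g; rewrite !Rmult_1_l, !exp_ln by assumption; ring).
  destruct (IVT_cor g 0 1 g_cont ltac:(lra)) as [s [hs gs]].
  { rewrite g0, g1; lra. }
  exists s; split.
  - destruct (Req_dec s 0) as [->|]; lra.
  - unfold Rpower, g in *; lra.
Qed.

Lemma self_similar_sum (w0 w1 w2 w3 Y : R) :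
  w0 + w1 + w2 + w3 = 1 ->
  1 + ((w0 * Y - 1/3) + (w1 * Y - 1/3) + (w2 * Y - 1/3) + (w3 * Y - 1/3))
    = Y - 1/3.
Proof.
  intros hw; transitivity ((w0 + w1 + w2 + w3) * Y - 1/3); [field|].
  rewrite hw; field.
Qed.

Lemma fuel_suffices (t n : R) :
  0 < t -> n < t * INR (Z.to_nat (up (n / t)) + 1).
Proof.
  intros ht.
  assert (up_le : IZR (up (n / t)) <= INR (Z.to_nat (up (n / t)))).
  { destruct (Z_lt_le_dec (up (n / t)) 0) as [hneg|hnn].
    - apply IZR_lt in hneg; pose proof (pos_INR (Z.to_nat (up (n / t)))); lra.
    - rewrite INR_IZR_INZ, Z2Nat.id by exact hnn; lra. }
  destruct (archimed (n / t)) as [hup _].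
  assert (t * (n / t) = n) by (field; lra).
  rewrite plus_INR, INR_1; nra.
Qed.

Section DNTree.

Variables t k p0 p1 p2 p3 : R.
Hypotheses (ht : 0 < t) (hk : 1 <= k).
Hypotheses (hp0 : 0 < p0 < 1) (hp1 : 0 < p1 < 1) (hp2 : 0 < p2 < 1)
  (hp3 : 0 < p3 < 1).

Notation Tf := (T_fuel t k p0 p1 p2 p3).

Lemma T_fuel_leaf f n r : n <= t * k ^ r -> Tf f n r = 1.
Proof.
  intros hn; destruct f as [|f]; cbn [T_fuel]; [reflexivity|].
  destruct (Rle_dec n (t * k ^ r)); [reflexivity|contradiction].
Qed.

Lemma T_fuel_node f n r : t * k ^ r < n ->
  Tf (S f) n r = 1 + (Tf f (p0 * (n - t * k ^ r)) (S r)
    + Tf f (p1 * (n - t * k ^ r)) (S r) + Tf f (p2 * (n - t * k ^ r)) (S r)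
    + Tf f (p3 * (n - t * k ^ r)) (S r)).
Proof.
  intros hn; cbn [T_fuel].
  destruct (Rle_dec n (t * k ^ r)); [lra|reflexivity].
Qed.

Lemma pow_k_ge1 r : 1 <= k ^ r.
Proof. apply pow_R1_Rle; lra. Qed.

Lemma normalized_gt n r : t * k ^ r < n -> t < n / k ^ r.
Proof.
  intros hn; pose proof (pow_k_ge1 r).
  assert (n = n / k ^ r * k ^ r) by (field; lra); nra.
Qed.

Lemma normalized_le n r : n <= t * k ^ r -> n / k ^ r <= t.
Proof.
  intros hn; pose proof (pow_k_ge1 r).
  assert (n = n / k ^ r * k ^ r) by (field; lra); nra.
Qed.

Lemma normalized_nonneg n r : 0 <= n -> 0 <= n / k ^ r.
Proof.
  intros hn; pose proof (pow_k_ge1 r).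
  unfold Rdiv; apply Rmult_le_pos; [lra|apply Rlt_le, Rinv_0_lt_compat; lra].
Qed.

Lemma normalized_child q n r :
  q * (n - t * k ^ r) / k ^ S r = q / k * (n / k ^ r - t).
Proof. pose proof (pow_k_ge1 r); simpl; field; lra. Qed.

Lemma div_k_pos q : 0 < q -> 0 < q / k.
Proof. intros; apply Rdiv_lt_0_compat; lra. Qed.

Lemma div_k_le q : 0 <= q -> q / k <= q.
Proof.
  intros hq; apply Rmult_le_reg_r with k; [lra|].
  unfold Rdiv; rewrite Rmult_assoc, Rinv_l; nra.
Qed.

Definition pmin := Rmin (Rmin p0 p1) (Rmin p2 p3).
Definition pmax := Rmax (Rmax p0 p1) (Rmax p2 p3).

Lemma pmin_pos : 0 < pmin.
Proof. unfold pmin; repeat apply Rmin_glb_lt; lra. Qed.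

Lemma pmax_lt1 : pmax < 1.
Proof. unfold pmax; repeat apply Rmax_lub_lt; lra. Qed.

Lemma p0_bounds : pmin <= p0 <= pmax.
Proof.
  unfold pmin, pmax; split; [apply (Rle_trans _ _ _ (Rmin_l _ _)), Rmin_l
  | apply (Rle_trans _ _ _ (Rmax_l p0 p1)), Rmax_l].
Qed.

Lemma p1_bounds : pmin <= p1 <= pmax.
Proof.
  unfold pmin, pmax; split; [apply (Rle_trans _ _ _ (Rmin_l _ _)), Rmin_r
  | apply (Rle_trans _ _ _ (Rmax_r p0 p1)), Rmax_l].
Qed.

Lemma p2_bounds : pmin <= p2 <= pmax.
Proof.
  unfold pmin, pmax; split; [apply (Rle_trans _ _ _ (Rmin_r _ _)), Rmin_l
  | apply (Rle_trans _ _ _ (Rmax_l p2 p3)), Rmax_r].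
Qed.

Lemma p3_bounds : pmin <= p3 <= pmax.
Proof.
  unfold pmin, pmax; split; [apply (Rle_trans _ _ _ (Rmin_r _ _)), Rmin_r
  | apply (Rle_trans _ _ _ (Rmax_r p2 p3)), Rmax_r].
Qed.

Variable s : R.
Hypothesis hs : 0 <= s.
Hypothesis hS :
  Rpower (p0 / k) s + Rpower (p1 / k) s + Rpower (p2 / k) s
  + Rpower (p3 / k) s = 1.

Definition upper_const := 4/3 / Rpower (t * (pmin / k)) s.

Lemma upper_const_pos : 0 < upper_const.
Proof. apply Rdiv_lt_0_compat; [lra|apply exp_pos]. Qed.

(* Normalized sizes of saturated vertices and of their children are all at
   least [t pmin / k]. *)
Lemma upper_const_ge x : t * (pmin / k) <= x -> 4/3 <= upper_const * Rpower x s.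
Proof.
  intros hx.
  assert (hmin : 0 < t * (pmin / k))
    by (apply Rmult_lt_0_compat; [lra|apply div_k_pos, pmin_pos]).
  assert (Rpower (t * (pmin / k)) s <= Rpower x s)
    by (apply Rle_Rpower_l; lra).
  assert (upper_const * Rpower (t * (pmin / k)) s = 4/3)
    by (unfold upper_const; field; apply Rgt_not_eq, exp_pos).
  pose proof upper_const_pos; nra.
Qed.

Lemma T_fuel_upper_child q f n r :
  0 < q -> pmin <= q ->
  (forall n r, t * k ^ r < n ->
     Tf f n r <= upper_const * Rpower (n / k ^ r) s - 1/3) ->
  t * k ^ r < n ->
  Tf f (q * (n - t * k ^ r)) (S r)
    <= Rpower (q / k) s * (upper_const * Rpower (n / k ^ r) s) - 1/3.
Proof.
  intros hq hqmin IH hn.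
  pose proof (normalized_gt n r hn) as hm.
  assert (hqk : 0 < q / k) by (apply div_k_pos; lra).
  assert (hpminq : pmin / k <= q / k)
    by (apply Rmult_le_compat_r; [apply Rlt_le, Rinv_0_lt_compat; lra|lra]).
  assert (hsplit : Rpower (q / k) s * (upper_const * Rpower (n / k ^ r) s)
                   = upper_const * Rpower (q / k * (n / k ^ r)) s)
    by (rewrite <- Rpower_mult_distr by lra; ring).
  rewrite hsplit.
  destruct (Rle_dec (q * (n - t * k ^ r)) (t * k ^ S r)) as [hleaf|hnode].
  - rewrite T_fuel_leaf by exact hleaf.
    enough (4/3 <= upper_const * Rpower (q / k * (n / k ^ r)) s) by lra.
    apply upper_const_ge; pose proof pmin_pos; nra.
  - apply Rnot_le_lt in hnode.
    eapply Rle_trans; [apply IH, hnode|].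
    rewrite normalized_child.
    assert (Rpower (q / k * (n / k ^ r - t)) s <= Rpower (q / k * (n / k ^ r)) s)
      by (apply Rle_Rpower_l; [lra|split; nra]).
    pose proof upper_const_pos; nra.
Qed.

Lemma T_fuel_upper f n r :
  t * k ^ r < n -> Tf f n r <= upper_const * Rpower (n / k ^ r) s - 1/3.
Proof.
  revert n r; induction f as [|f IH]; intros n r hn.
  - simpl; enough (4/3 <= upper_const * Rpower (n / k ^ r) s) by lra.
    apply upper_const_ge; pose proof (normalized_gt n r hn).
    pose proof (div_k_le pmin (Rlt_le _ _ pmin_pos)); pose proof p0_bounds; nra.
  - rewrite T_fuel_node by exact hn.
    pose proof (T_fuel_upper_child p0 f n r ltac:(lra) (proj1 p0_bounds) IH hn).
    pose proof (T_fuel_upper_child p1 f n r ltac:(lra) (proj1 p1_bounds) IH hn).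
    pose proof (T_fuel_upper_child p2 f n r ltac:(lra) (proj1 p2_bounds) IH hn).
    pose proof (T_fuel_upper_child p3 f n r ltac:(lra) (proj1 p3_bounds) IH hn).
    pose proof (self_similar_sum _ _ _ _ (upper_const * Rpower (n / k ^ r) s) hS).
    lra.
Qed.

(* Chosen so that [lower_shift * (1 - pmax) = t]: shifting the normalized size
   by it compensates the loss of [t] at every saturated vertex. *)
Definition lower_shift := t / (1 - pmax).
Definition lower_const := 4/3 / Rpower (t + lower_shift) s.

Lemma lower_shift_pos : 0 < lower_shift.
Proof. apply Rdiv_lt_0_compat; [lra|pose proof pmax_lt1; lra]. Qed.

Lemma lower_const_pos : 0 < lower_const.
Proof. apply Rdiv_lt_0_compat; [lra|apply exp_pos]. Qed.

Lemma lower_shift_absorbs q m : 0 < q -> q <= pmax -> t < m ->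
  q / k * (m + lower_shift) <= q / k * (m - t) + lower_shift.
Proof.
  intros hq hqmax hm.
  assert (hshift : t = lower_shift * (1 - pmax))
    by (unfold lower_shift; pose proof pmax_lt1; field; lra).
  pose proof lower_shift_pos; pose proof pmax_lt1.
  pose proof (div_k_le q (Rlt_le _ _ hq)).
  assert (q / k * (lower_shift + t) <= pmax * (lower_shift + t))
    by (apply Rmult_le_compat_r; lra).
  nra.
Qed.

Lemma T_fuel_lower_child q f n r :
  0 < q < 1 -> q <= pmax ->
  (forall n r, 0 <= n -> n < t * INR f ->
     lower_const * Rpower (n / k ^ r + lower_shift) s - 1/3 <= Tf f n r) ->
  t * k ^ r < n -> n < t * INR (S f) ->
  Rpower (q / k) s * (lower_const * Rpower (n / k ^ r + lower_shift) s) - 1/3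
    <= Tf f (q * (n - t * k ^ r)) (S r).
Proof.
  intros hq hqmax IH hn hf.
  pose proof (normalized_gt n r hn) as hm; pose proof (pow_k_ge1 r).
  pose proof lower_shift_pos; pose proof lower_const_pos.
  assert (hqk : 0 < q / k) by (apply div_k_pos; lra).
  rewrite S_INR in hf.
  eapply Rle_trans; [|apply IH; nra].
  rewrite normalized_child.
  assert (hsplit : Rpower (q / k) s
                     * (lower_const * Rpower (n / k ^ r + lower_shift) s)
                   = lower_const * Rpower (q / k * (n / k ^ r + lower_shift)) s)
    by (rewrite <- Rpower_mult_distr by lra; ring).
  rewrite hsplit.
  assert (Rpower (q / k * (n / k ^ r + lower_shift)) s
            <= Rpower (q / k * (n / k ^ r - t) + lower_shift) s).
  { apply Rle_Rpower_l; [lra|split; [nra|]].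
    apply lower_shift_absorbs; lra. }
  nra.
Qed.

Lemma T_fuel_lower f n r : 0 <= n -> n < t * INR f ->
  lower_const * Rpower (n / k ^ r + lower_shift) s - 1/3 <= Tf f n r.
Proof.
  revert n r; induction f as [|f IH]; intros n r hn hf.
  - simpl in hf; lra.
  - destruct (Rle_dec n (t * k ^ r)) as [hleaf|hnode].
    + rewrite T_fuel_leaf by exact hleaf.
      pose proof (normalized_le n r hleaf); pose proof (normalized_nonneg n r hn).
      pose proof lower_shift_pos; pose proof lower_const_pos.
      assert (Rpower (n / k ^ r + lower_shift) s <= Rpower (t + lower_shift) s)
        by (apply Rle_Rpower_l; lra).
      assert (lower_const * Rpower (t + lower_shift) s = 4/3)
        by (unfold lower_const; field; apply Rgt_not_eq, exp_pos).
      nra.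
    + apply Rnot_le_lt in hnode; rewrite T_fuel_node by exact hnode.
      pose proof (T_fuel_lower_child p0 f n r hp0 (proj2 p0_bounds) IH hnode hf).
      pose proof (T_fuel_lower_child p1 f n r hp1 (proj2 p1_bounds) IH hnode hf).
      pose proof (T_fuel_lower_child p2 f n r hp2 (proj2 p2_bounds) IH hnode hf).
      pose proof (T_fuel_lower_child p3 f n r hp3 (proj2 p3_bounds) IH hnode hf).
      pose proof (self_similar_sum _ _ _ _
        (lower_const * Rpower (n / k ^ r + lower_shift) s) hS).
      lra.
Qed.

Lemma T_upper N : t < N -> T t k p0 p1 p2 p3 N 0 <= upper_const * Rpower N s.
Proof.
  intros hN; unfold T.
  pose proof (T_fuel_upper (Z.to_nat (up (N / t)) + 1) N 0).
  replace (N / k ^ 0) with N in * by (simpl; field); simpl in *; lra.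
Qed.

Lemma T_lower N :
  0 < N -> lower_const * Rpower N s - 1/3 <= T t k p0 p1 p2 p3 N 0.
Proof.
  intros hN; unfold T.
  pose proof (T_fuel_lower (Z.to_nat (up (N / t)) + 1) N 0 ltac:(lra)
    (fuel_suffices t N ht)).
  replace (N / k ^ 0) with N in * by (simpl; field).
  assert (Rpower N s <= Rpower (N + lower_shift) s)
    by (pose proof lower_shift_pos; apply Rle_Rpower_l; lra).
  pose proof lower_const_pos; nra.
Qed.

End DNTree.

Theorem corollary1 (t k p0 p1 p2 p3 : R)
  (ht : 0 < t) (hk : 1 <= k)
  (hp0 : 0 < p0 < 1) (hp1 : 0 < p1 < 1) (hp2 : 0 < p2 < 1) (hp3 : 0 < p3 < 1)
  (hsum : p0 + p1 + p2 + p3 = 1) :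
  exists s : R, 0 < s <= 1 /\
    exists c1 c2 N0 : R, 0 < c1 /\ 0 < c2 /\ 0 < N0 /\
      forall N : R, N0 <= N ->
        c1 * Rpower N s <= T t k p0 p1 p2 p3 N 0 <= c2 * Rpower N s.
Proof.
  destruct (similarity_exponent_exists (p0 / k) (p1 / k) (p2 / k) (p3 / k))
    as [s [hs hS]]; try (apply Rdiv_lt_0_compat; lra).
  { replace (p0 / k + p1 / k + p2 / k + p3 / k) with ((p0 + p1 + p2 + p3) / k)
      by (field; lra).
    rewrite hsum; apply (div_k_le k hk); lra. }
  set (a := lower_const t p0 p1 p2 p3 s).
  assert (ha : 0 < a) by apply lower_const_pos.
  (* Beyond [B] the additive [-1/3] costs at most half of [a N^s]. *)
  set (B := Rpower (2 / (3 * a)) (1 / s)).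
  assert (hB : 0 < B) by apply exp_pos.
  assert (hBs : Rpower B s = 2 / (3 * a)).
  { unfold B; rewrite Rpower_mult; replace (1 / s * s) with 1 by (field; lra).
    apply Rpower_1, Rdiv_lt_0_compat; lra. }
  exists s; split; [exact hs|].
  exists (a / 2), (upper_const t k p0 p1 p2 p3 s), (t + 1 + B).
  split; [lra|]; split; [apply upper_const_pos|]; split; [lra|].
  intros N hN; split.
  - pose proof (T_lower t k p0 p1 p2 p3 ht hk hp0 hp1 hp2 hp3 s ltac:(lra) hS N
      ltac:(lra)) as hlow; fold a in hlow.
    assert (Rpower B s <= Rpower N s) by (apply Rle_Rpower_l; lra).
    assert (2/3 <= a * Rpower N s).
    { replace (2/3) with (a * Rpower B s) by (rewrite hBs; field; lra).
      apply Rmult_le_compat_l; lra. }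
    lra.
  - apply (T_upper t k p0 p1 p2 p3 ht hk hp0 hp1 hp2 hp3 s ltac:(lra) hS); lra.
Qed.
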